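(* Let $n,d,d_k$ be positive integers, $X\in\mathbb{R}^{n\times d}$, $W_Q,W_K\in\mathbb{R}^{d\times d_k}$, $E\in\mathbb{R}^{n\times n}$, and let $P\in\mathbb{R}^{d\times d}$ be an orthogonal projector. Put $B=W_QW_K^\top$, $X_P=XP$, $G_Q=X^\top E X W_K/\sqrt{d_k}$, $G_K=X^\top E^\top X W_Q/\sqrt{d_k}$, and for $\eta_Q,\eta_K\ge0$ let $B^+=(W_Q-\eta_QG_Q)(W_K-\eta_KG_K)^\top$ and $\Delta Z_P=X_P P(B^+-B)P X_P^\top/\sqrt{d_k}$. Then for $S\in\{Q,K\}$, $$\|XW_SW_S^\top P\|_F\le\|X\|_F\|W_S\|_{\mathrm{op}}^2,$$ and consequently $$\|\Delta Z_P\|_F\le\frac{\|E\|_{\mathrm{op}}\|X\|_F}{d_k}\Big(\eta_Q\|W_K\|_{\mathrm{op}}^2+\eta_K\|W_Q\|_{\mathrm{op}}^2\Big)\|X_P\|_{\mathrm{op}}^2\|X_P\|_F+R_2,$$ where $R_2=\eta_Q\eta_K\|X_P\|_{\mathrm{op}}^2\|X_P\|_F^2\|E\|_{\mathrm{op}}^2\|XW_K\|_F\|XW_Q\|_F/d_k^{3/2}$.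
   Context: $\|\cdot\|_F$ is the Frobenius norm, $\|\cdot\|_{\mathrm{op}}$ the spectral norm; an orthogonal projector satisfies $P=P^\top=P^2$. *)

From mathcomp Require Import all_boot all_order all_algebra.
From mathcomp Require Import classical_sets reals.
Set Implicit Arguments. Unset Strict Implicit. Unset Printing Implicit Defensive.
Import Order.TTheory GRing.Theory Num.Theory.
Local Open Scope ring_scope.
Local Open Scope classical_set_scope.

Definition frob (R : realType) (m n : nat) (A : 'M[R]_(m, n)) : R :=
  Num.sqrt (\sum_(i < m) \sum_(j < n) A i j ^+ 2).

Definition vnorm (R : realType) (n : nat) (v : 'cV[R]_n) : R :=
  Num.sqrt (\sum_(i < n) v i 0 ^+ 2).

Definition opnorm (R : realType) (m n : nat) (A : 'M[R]_(m, n)) : R :=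
  sup [set vnorm (A *m v) | v in [set v : 'cV[R]_n | vnorm v <= 1]].

Definition orth_proj (R : realType) (d : nat) (P : 'M[R]_d) : Prop :=
  P = P^T /\ P *m P = P.

From mathcomp Require Import all_boot all_order all_algebra.
From mathcomp Require Import classical_sets reals.
From mathcomp Require Import ring lra.
Import Order.TTheory GRing.Theory Num.Theory.
Local Open Scope ring_scope.
Set Implicit Arguments. Unset Strict Implicit. Unset Printing Implicit Defensive.

(* Everything reduces to norm inequalities: the Frobenius norm is
   submultiplicative against the operator norm, ||A F C||_F <=
   ||A||_op ||F||_F ||C||_op; the operator norm is invariant under
   transposition, bounded by the Frobenius norm, and at most 1 on an
   orthogonal projector.  Expanding
   B+ - B and using X_P P = X_P, P X_P^T = X_P^T splits Delta Z_P into two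
   first-order terms X_P X_P^T E' X W W^T P X_P^T (with E' = E, and E' = E^T
   for the transposed one), each controlled by the first bound, and the
   second-order term X_P X_P^T E (X W_K)(X W_Q)^T E X_P X_P^T; the triangle
   inequality and (1/sqrt d_k)^2 = 1/d_k assemble the estimate. *)

Section L2Norm.
Variables (R : realType) (I : finType).
Implicit Types f g : I -> R.

Definition l2norm f : R := Num.sqrt (\sum_i f i ^+ 2).

Lemma sumr_sqr_ge0 f : 0 <= \sum_i f i ^+ 2.
Proof. by apply: sumr_ge0 => i _; exact: sqr_ge0. Qed.

Lemma l2norm_ge0 f : 0 <= l2norm f.
Proof. exact: sqrtr_ge0. Qed.

Lemma sqr_l2norm f : l2norm f ^+ 2 = \sum_i f i ^+ 2.
Proof. by rewrite sqr_sqrtr ?sumr_sqr_ge0. Qed.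

(* Lagrange's identity: the defect in Cauchy-Schwarz is a sum of squares. *)
Lemma sqr_cauchy_schwarz f g :
  (\sum_i f i * g i) ^+ 2 <= (\sum_i f i ^+ 2) * (\sum_i g i ^+ 2).
Proof.
have lagrange : \sum_i \sum_j (f i * g j - f j * g i) ^+ 2
    = 2 * ((\sum_i f i ^+ 2) * (\sum_i g i ^+ 2) - (\sum_i f i * g i) ^+ 2).
  rewrite (eq_bigr (fun i => \sum_j (f i ^+ 2 * g j ^+ 2 + f j ^+ 2 * g i ^+ 2
                                  - 2 * (f i * g i * (f j * g j))))); last first.
    by move=> i _; apply: eq_bigr => j _; ring.
  under eq_bigr do rewrite sumrB big_split /=.
  rewrite sumrB big_split /= [X in _ + X - _]exchange_big /=.
  under [X in _ - X]eq_bigr do rewrite -mulr_sumr.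
  by rewrite -mulr_sumr -!big_distrlr /=; ring.
have : 0 <= \sum_i \sum_j (f i * g j - f j * g i) ^+ 2.
  by apply: sumr_ge0 => i _; exact: sumr_sqr_ge0.
by rewrite lagrange pmulr_rge0 // subr_ge0.
Qed.

Lemma cauchy_schwarz f g : \sum_i f i * g i <= l2norm f * l2norm g.
Proof.
rewrite -sqrtrM ?sumr_sqr_ge0 // (le_trans (ler_norm _)) // -sqrtr_sqr.
exact/ler_wsqrtr/sqr_cauchy_schwarz.
Qed.

Lemma l2normD f g : l2norm (fun i => f i + g i) <= l2norm f + l2norm g.
Proof.
rewrite -ler_sqr ?nnegrE ?addr_ge0 ?l2norm_ge0 // sqrrD !sqr_l2norm.
have -> : \sum_i (f i + g i) ^+ 2
          = \sum_i f i ^+ 2 + 2 * \sum_i f i * g i + \sum_i g i ^+ 2.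
  by rewrite mulr_sumr -!big_split; apply: eq_bigr => i _ /=; ring.
have := cauchy_schwarz f g; lra.
Qed.

Lemma l2normZ a f : l2norm (fun i => a * f i) = `|a| * l2norm f.
Proof.
rewrite /l2norm; under eq_bigr do rewrite exprMn.
by rewrite -mulr_sumr sqrtrM ?sqr_ge0 // sqrtr_sqr.
Qed.

End L2Norm.

Lemma le_of_sqr_le_mul (R : realFieldType) (x a : R) :
  0 <= x -> 0 <= a -> x ^+ 2 <= a * x -> x <= a.
Proof. by move=> *; nra. Qed.

Section MatrixNorms.
Variable R : realType.

Lemma frobE m n (A : 'M[R]_(m, n)) : frob A = l2norm (fun p : 'I_m * 'I_n => A p.1 p.2).
Proof. by rewrite /frob /l2norm pair_big. Qed.

Lemma frob_ge0 m n (A : 'M[R]_(m, n)) : 0 <= frob A.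
Proof. exact: sqrtr_ge0. Qed.

Lemma sqr_frob m n (A : 'M[R]_(m, n)) : frob A ^+ 2 = \sum_i \sum_j A i j ^+ 2.
Proof. by rewrite frobE sqr_l2norm pair_big. Qed.

Lemma frobD m n (A B : 'M[R]_(m, n)) : frob (A + B) <= frob A + frob B.
Proof.
by rewrite !frobE /l2norm; under eq_bigr do rewrite mxE; exact: l2normD.
Qed.

Lemma frobZ m n a (A : 'M[R]_(m, n)) : frob (a *: A) = `|a| * frob A.
Proof. by rewrite !frobE -l2normZ /l2norm; under eq_bigr do rewrite mxE. Qed.

Lemma frobB m n (A B : 'M[R]_(m, n)) : frob (A - B) <= frob A + frob B.
Proof. by have := frobD A (-1 *: B); rewrite frobZ normrN1 mul1r scaleN1r. Qed.

Lemma frob_tr m n (A : 'M[R]_(m, n)) : frob A^T = frob A.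
Proof.
rewrite /frob exchange_big; congr Num.sqrt.
by apply: eq_bigr => i _; apply: eq_bigr => j _; rewrite mxE.
Qed.

Lemma vnorm_ge0 n (v : 'cV[R]_n) : 0 <= vnorm v.
Proof. exact: sqrtr_ge0. Qed.

Lemma vnorm0 n : vnorm (0 : 'cV[R]_n) = 0.
Proof. by rewrite /vnorm big1 ?sqrtr0 // => i _; rewrite mxE expr0n. Qed.

Lemma vnormZ n a (v : 'cV[R]_n) : vnorm (a *: v) = `|a| * vnorm v.
Proof. by rewrite /vnorm -[RHS]l2normZ /l2norm; under eq_bigr do rewrite mxE. Qed.

Lemma sqr_vnorm n (v : 'cV[R]_n) : vnorm v ^+ 2 = (v^T *m v) 0 0.
Proof.
by rewrite sqr_l2norm mxE; apply: eq_bigr => i _; rewrite mxE expr2.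
Qed.

Lemma cauchy_schwarz_col n (u w : 'cV[R]_n) : (u^T *m w) 0 0 <= vnorm u * vnorm w.
Proof. by rewrite mxE; under eq_bigr do rewrite mxE; exact: cauchy_schwarz. Qed.

Lemma vnorm_mulmx_frob m n (A : 'M[R]_(m, n)) (v : 'cV[R]_n) :
  vnorm (A *m v) <= frob A * vnorm v.
Proof.
rewrite -ler_sqr ?nnegrE ?mulr_ge0 ?frob_ge0 ?vnorm_ge0 //.
rewrite exprMn sqr_frob !sqr_l2norm mulr_suml; apply: ler_sum => i _.
by rewrite mxE sqr_cauchy_schwarz.
Qed.

Section OperatorNorm.
Variables m n : nat.
Implicit Type A : 'M[R]_(m, n).

Lemma opnorm_set_ubound A :
  has_ubound [set vnorm (A *m v) | v in [set v : 'cV[R]_n | vnorm v <= 1]].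
Proof.
exists (frob A) => _ [v /= v_le1 <-].
by rewrite (le_trans (vnorm_mulmx_frob A v)) // ler_piMr ?frob_ge0.
Qed.

Lemma vnorm_mulmx_le_opnorm A v : vnorm v <= 1 -> vnorm (A *m v) <= opnorm A.
Proof. by move=> v_le1; apply: (ub_le_sup (opnorm_set_ubound A)); exists v. Qed.

Lemma opnorm_ge0 A : 0 <= opnorm A.
Proof.
by rewrite -(vnorm0 m) -(mulmx0 _ A) vnorm_mulmx_le_opnorm // vnorm0.
Qed.

Lemma opnorm_le A c :
  0 <= c -> (forall v, vnorm (A *m v) <= c * vnorm v) -> opnorm A <= c.
Proof.
move=> c_ge0 Ac; apply: ge_sup; first by exists (vnorm (A *m 0)), 0; rewrite //= vnorm0.
by move=> _ [v /= v_le1 <-]; rewrite (le_trans (Ac v)) // ler_piMr.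
Qed.

Lemma opnorm_le_frob A : opnorm A <= frob A.
Proof. exact/opnorm_le/vnorm_mulmx_frob/frob_ge0. Qed.

Lemma vnorm_mulmx A v : vnorm (A *m v) <= opnorm A * vnorm v.
Proof.
have [v0|v_neq0] := eqVneq (vnorm v) 0.
  by rewrite (le_trans (vnorm_mulmx_frob A v)) // v0 !mulr0.
have v_gt0 : 0 < vnorm v by rewrite lt_def v_neq0 vnorm_ge0.
have := vnorm_mulmx_le_opnorm A (v := (vnorm v)^-1 *: v).
rewrite -scalemxAr !vnormZ ger0_norm ?invr_ge0 ?vnorm_ge0 // mulVf // lexx.
by move=> /(_ isT); rewrite -(ler_pM2r v_gt0) mulrAC mulVf ?mul1r.
Qed.

End OperatorNorm.

Lemma opnormM m n p (A : 'M[R]_(m, n)) (B : 'M[R]_(n, p)) :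
  opnorm (A *m B) <= opnorm A * opnorm B.
Proof.
apply: opnorm_le => [|v]; first by rewrite mulr_ge0 ?opnorm_ge0.
rewrite -mulmxA (le_trans (vnorm_mulmx A _)) // -mulrA.
by rewrite ler_wpM2l ?opnorm_ge0 ?vnorm_mulmx.
Qed.

Lemma opnorm_tr_le m n (A : 'M[R]_(m, n)) : opnorm A^T <= opnorm A.
Proof.
apply: opnorm_le => [|u]; first exact: opnorm_ge0.
apply: le_of_sqr_le_mul; rewrite ?mulr_ge0 ?opnorm_ge0 ?vnorm_ge0 //.
have -> : vnorm (A^T *m u) ^+ 2 = (u^T *m (A *m (A^T *m u))) 0 0.
  by rewrite sqr_vnorm trmx_mul trmxK !mulmxA.
rewrite (le_trans (cauchy_schwarz_col _ _)) // mulrAC [_ * vnorm u]mulrC.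
by rewrite ler_wpM2l ?vnorm_ge0 ?vnorm_mulmx.
Qed.

Lemma opnorm_tr m n (A : 'M[R]_(m, n)) : opnorm A^T = opnorm A.
Proof.
by apply/le_anti; rewrite opnorm_tr_le /=; have := opnorm_tr_le A^T; rewrite trmxK.
Qed.

(* [|P v|^2 = v^T P^T P v = v^T P v <= |v| |P v|] *)
Lemma opnorm_proj_le1 d (P : 'M[R]_d) : orth_proj P -> opnorm P <= 1.
Proof.
case=> P_sym P_idem; apply: opnorm_le => [|v]; rewrite ?ler01 // mul1r.
apply: le_of_sqr_le_mul; rewrite ?vnorm_ge0 //.
have -> : vnorm (P *m v) ^+ 2 = (v^T *m (P *m v)) 0 0.
  by rewrite sqr_vnorm trmx_mul -P_sym -mulmxA (mulmxA P) P_idem.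
exact: cauchy_schwarz_col.
Qed.

Lemma frob_mulmx_opl m n p (A : 'M[R]_(m, n)) (B : 'M[R]_(n, p)) :
  frob (A *m B) <= opnorm A * frob B.
Proof.
rewrite -ler_sqr ?nnegrE ?mulr_ge0 ?frob_ge0 ?opnorm_ge0 //.
rewrite exprMn !sqr_frob exchange_big [X in _ * X]exchange_big mulr_sumr /=.
apply: ler_sum => j _.
have col_sqr (C : 'M[R]_(_, p)) : vnorm (col j C) ^+ 2 = \sum_i C i j ^+ 2.
  by rewrite sqr_l2norm; apply: eq_bigr => i _; rewrite mxE.
rewrite -!col_sqr -exprMn colE -mulmxA -colE.
by rewrite lerXn2r ?nnegrE ?mulr_ge0 ?opnorm_ge0 ?vnorm_ge0 ?vnorm_mulmx.
Qed.

Lemma frob_mulmx_opr m n p (A : 'M[R]_(m, n)) (B : 'M[R]_(n, p)) :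
  frob (A *m B) <= frob A * opnorm B.
Proof.
by rewrite -frob_tr trmx_mul mulrC -opnorm_tr -(frob_tr A) frob_mulmx_opl.
Qed.

Lemma frob_mulmx m n p (A : 'M[R]_(m, n)) (B : 'M[R]_(n, p)) :
  frob (A *m B) <= frob A * frob B.
Proof.
by rewrite (le_trans (frob_mulmx_opl A B)) // ler_wpM2r ?frob_ge0 ?opnorm_le_frob.
Qed.

Lemma opnormM_le m n p (A : 'M[R]_(m, n)) (B : 'M[R]_(n, p)) a b :
  opnorm A <= a -> opnorm B <= b -> opnorm (A *m B) <= a * b.
Proof. by move=> Aa Bb; rewrite (le_trans (opnormM A B)) // ler_pM ?opnorm_ge0. Qed.

Lemma opnorm_gram_mulmx_le m n p (A : 'M[R]_(m, n)) (B : 'M[R]_(m, p)) :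
  opnorm (A *m A^T *m B) <= opnorm A ^+ 2 * opnorm B.
Proof.
by rewrite expr2; apply: opnormM_le => //; apply: opnormM_le; rewrite ?opnorm_tr.
Qed.

Lemma frob_mulmx3_le m n p q
    (A : 'M[R]_(m, n)) (F : 'M[R]_(n, p)) (C : 'M[R]_(p, q)) a f c :
  opnorm A <= a -> frob F <= f -> opnorm C <= c -> frob (A *m F *m C) <= a * f * c.
Proof.
move=> Aa Ff Cc.
rewrite (le_trans (frob_mulmx_opr _ _)) // ler_pM ?frob_ge0 ?opnorm_ge0 //.
by rewrite (le_trans (frob_mulmx_opl _ _)) // ler_pM ?frob_ge0 ?opnorm_ge0.
Qed.

Lemma frob_combination_le m n (A B C : 'M[R]_(m, n)) a b c x y z :
  frob A <= x -> frob B <= y -> frob C <= z -> 0 <= a -> 0 <= b -> 0 <= c ->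
  frob (a *: A - b *: B - c *: C) <= a * x + b * y + c * z.
Proof.
move=> Ax By Cz a0 b0 c0.
rewrite (le_trans (frobB _ _)) // lerD //; last by rewrite frobZ ger0_norm ?ler_wpM2l.
by rewrite (le_trans (frobB _ _)) // !frobZ !ger0_norm // lerD ?ler_wpM2l.
Qed.

End MatrixNorms.

Lemma mulmx_perturb_tr (R : comNzRingType) m n (W1 W2 G1 G2 : 'M[R]_(m, n)) a b :
  (W1 - a *: G1) *m (W2 - b *: G2)^T - W1 *m W2^T
  = (a * b) *: (G1 *m G2^T) - b *: (W1 *m G2^T) - a *: (G1 *m W2^T).
Proof.
rewrite [(W2 - _)^T]linearB /= [(_ *: G2)^T]linearZ /=.
rewrite mulmxBl !mulmxBr -!scalemxAl -!scalemxAr scalerA.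
by rewrite opprB addrAC (addrAC (W1 *m W2^T)) subrr add0r addrCA addrA.
Qed.

Section ProjectedAttention.
Variables (R : realType) (n d : nat) (X : 'M[R]_(n, d)) (P : 'M[R]_d).
Hypothesis P_proj : orth_proj P.
Local Notation XP := (X *m P).

Lemma frob_gram_proj_le k (W : 'M[R]_(d, k)) :
  frob (X *m W *m W^T *m P) <= frob X * opnorm W ^+ 2.
Proof.
rewrite (le_trans (frob_mulmx_opr _ _)) // -[leRHS]mulr1.
rewrite ler_pM ?frob_ge0 ?opnorm_ge0 ?opnorm_proj_le1 // expr2 mulrA.
rewrite (le_trans (frob_mulmx_opr _ _)) // opnorm_tr ler_wpM2r ?opnorm_ge0 //.
exact: frob_mulmx_opr.
Qed.

Lemma frob_first_order_le k (E : 'M[R]_n) (W : 'M[R]_(d, k)) :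
  frob (XP *m XP^T *m E *m (X *m W *m W^T *m P) *m XP^T)
  <= opnorm E * frob X * opnorm W ^+ 2 * opnorm XP ^+ 2 * frob XP.
Proof.
have XPt : opnorm XP^T <= frob XP by rewrite opnorm_tr opnorm_le_frob.
apply: le_trans (frob_mulmx3_le (opnorm_gram_mulmx_le XP E) (frob_gram_proj_le W) XPt) _.
by lra.
Qed.

Lemma frob_second_order_le k (E : 'M[R]_n) (WK WQ : 'M[R]_(d, k)) :
  frob (XP *m XP^T *m E *m (X *m WK *m (X *m WQ)^T) *m (E *m XP *m XP^T))
  <= opnorm XP ^+ 2 * frob XP ^+ 2 * opnorm E ^+ 2 * frob (X *m WK) * frob (X *m WQ).
Proof.
have EXPXPt : opnorm (E *m XP *m XP^T) <= opnorm XP ^+ 2 * opnorm E.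
  rewrite -opnorm_tr trmx_mul trmxK [(E *m _)^T]trmx_mul mulmxA -(opnorm_tr E).
  exact: opnorm_gram_mulmx_le.
have KQ : frob (X *m WK *m (X *m WQ)^T) <= frob (X *m WK) * frob (X *m WQ).
  by rewrite -(frob_tr (X *m WQ)) frob_mulmx.
apply: le_trans (frob_mulmx3_le (opnorm_gram_mulmx_le XP E) KQ EXPXPt) _.
have XPXP : opnorm XP ^+ 2 <= frob XP ^+ 2.
  by rewrite ler_sqr ?nnegrE ?opnorm_ge0 ?frob_ge0 ?opnorm_le_frob.
have : 0 <= opnorm XP ^+ 2 * opnorm E ^+ 2 * frob (X *m WK) * frob (X *m WQ).
  by rewrite !mulr_ge0 ?exprn_ge0 ?opnorm_ge0 ?frob_ge0.
by nra.
Qed.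

Lemma proj_sandwich_perturb k (E : 'M[R]_n) (WQ WK : 'M[R]_(d, k)) (c eQ eK : R) :
  XP *m P *m ((WQ - eQ *: (c *: (X^T *m E *m X *m WK)))
             *m (WK - eK *: (c *: (X^T *m E^T *m X *m WQ)))^T - WQ *m WK^T) *m P *m XP^T
  = (eQ * eK * c ^+ 2) *: (XP *m XP^T *m E *m (X *m WK *m (X *m WQ)^T) *m (E *m XP *m XP^T))
    - (eK * c) *: (XP *m XP^T *m E^T *m (X *m WQ *m WQ^T *m P) *m XP^T)^T
    - (eQ * c) *: (XP *m XP^T *m E *m (X *m WK *m WK^T *m P) *m XP^T).
Proof.
have [P_sym P_idem] := P_proj.
have mulmxPP m (M : 'M[R]_(m, d)) : M *m P *m P = M *m P by rewrite -mulmxA P_idem.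
rewrite !scalerA mulmx_perturb_tr !(mulmxBr, mulmxBl) -!scalemxAr -!scalemxAl.
have -> : eQ * c * (eK * c) = eQ * eK * c ^+ 2 by ring.
congr (_ *: _ - _ *: _ - _ *: _);
  by rewrite !trmx_mul ?trmxK -!P_sym !mulmxA !mulmxPP.
Qed.

End ProjectedAttention.

Theorem corollary1 (R : realType) (n d dk : nat)
  (hn : (0 < n)%N) (hd : (0 < d)%N) (hdk : (0 < dk)%N)
  (X : 'M[R]_(n, d)) (WQ WK : 'M[R]_(d, dk)) (E : 'M[R]_n) (P : 'M[R]_d)
  (hP : orth_proj P) (etaQ etaK : R) (heQ : 0 <= etaQ) (heK : 0 <= etaK) :
  let sdk := Num.sqrt (dk%:R : R) in
  let B := WQ *m WK^T in
  let XP := X *m P in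
  let GQ := sdk^-1 *: (X^T *m E *m X *m WK) in
  let GK := sdk^-1 *: (X^T *m E^T *m X *m WQ) in
  let Bp := (WQ - etaQ *: GQ) *m (WK - etaK *: GK)^T in
  let DZ := sdk^-1 *: (XP *m P *m (Bp - B) *m P *m XP^T) in
  let R2 := etaQ * etaK * opnorm XP ^+ 2 * frob XP ^+ 2 * opnorm E ^+ 2
            * frob (X *m WK) * frob (X *m WQ) / (dk%:R * sdk) in
  [/\ frob (X *m WQ *m WQ^T *m P) <= frob X * opnorm WQ ^+ 2,
      frob (X *m WK *m WK^T *m P) <= frob X * opnorm WK ^+ 2
    & frob DZ <= opnorm E * frob X / dk%:R
                 * (etaQ * opnorm WK ^+ 2 + etaK * opnorm WQ ^+ 2)
                 * opnorm XP ^+ 2 * frob XP + R2].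
Proof.
move=> sdk B XP GQ GK Bp DZ R2.
have sdk_gt0 : 0 < sdk by rewrite sqrtr_gt0 ltr0n.
have c_ge0 : 0 <= sdk^-1 by rewrite invr_ge0 ltW.
split; [exact: frob_gram_proj_le | exact: frob_gram_proj_le |].
have dk_sdk : dk%:R = sdk ^+ 2 by rewrite sqr_sqrtr ?ler0n.
have first_orderQ := frob_first_order_le X hP E WK.
have first_orderK := frob_first_order_le X hP E^T WQ.
rewrite opnorm_tr -frob_tr in first_orderK.
have second_order := frob_second_order_le X P E WK WQ.
rewrite /DZ /Bp /B /GQ /GK /XP (proj_sandwich_perturb X hP) frobZ ger0_norm //.
rewrite (le_trans (ler_wpM2l c_ge0
  (frob_combination_le second_order first_orderK first_orderQ _ _ _))) ?mulr_ge0 //.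
rewrite /R2 dk_sdk le_eqVlt; apply/orP; left; apply/eqP.
by field; rewrite gt_eqF.
Qed.
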